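(* Let $A=(a_{i,j})$ be a symmetric $n\times n$ matrix with nonnegative entries (the weighted adjacency matrix of an undirected graph, self-loops allowed) with $\deg(i)=\sum_{j=1}^n a_{i,j}>0$ for all $i$. For each $i$ let $h_i:[0,1]\to[0,1]$ be a bijective, monotonically increasing function, and define $F:[0,1]^n\to[0,1]^n$ by $F_i(\beta)=h_i(\mu_i)$ with $\mu_i=\frac{1}{\deg(i)}\sum_{j=1}^n a_{i,j}\beta_j$. Then there exists a differentiable function $V:[0,1]^n\to\mathbb{R}$ with $V\ge 0$ such that for all $\beta\in[0,1]^n$, $$\langle F(\beta)-\beta,\nabla V(\beta)\rangle\le 0,$$ with equality if and only if $F(\beta)=\beta$.
   Context: In the paper $h_i=h(\cdot,\gamma_i)$ for a family of functions indexed by parameters $\gamma_i$. *)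

From HB Require Import structures.
From mathcomp Require Import all_boot all_order all_algebra.
From mathcomp Require Import all_classical all_reals all_analysis.
Set Implicit Arguments. Unset Strict Implicit. Unset Printing Implicit Defensive.
Import Order.TTheory GRing.Theory Num.Theory.
Import numFieldNormedType.Exports.
Local Open Scope classical_set_scope.
Local Open Scope ring_scope.

Section Defs.
Context {R : realType} {n : nat}.

Definition cube : set 'rV[R]_n := [set b | forall j : 'I_n, 0 <= b ord0 j <= 1].

Definition deg (A : 'M[R]_n) (i : 'I_n) : R := \sum_(j < n) A i j.

Definition mu (A : 'M[R]_n) (b : 'rV[R]_n) (i : 'I_n) : R :=
  (\sum_(j < n) A i j * b ord0 j) / deg A i.

Definition Fmap (A : 'M[R]_n) (h : 'I_n -> R -> R) (b : 'rV[R]_n) : 'rV[R]_n :=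
  \row_i h i (mu A b i).

Definition grad (V : 'rV[R]_n -> R) (b : 'rV[R]_n) : 'rV[R]_n :=
  \row_j derive V b (delta_mx ord0 j : 'rV[R]_n).

Definition dotv (u v : 'rV[R]_n) : R := \sum_(j < n) u ord0 j * v ord0 j.

End Defs.

From HB Require Import structures.
From mathcomp Require Import all_boot all_order all_algebra.
From mathcomp Require Import all_classical all_reals all_analysis.
From mathcomp Require Import ring lra.
Import Order.TTheory GRing.Theory Num.Theory.
Import numFieldNormedType.Exports.
Local Open Scope classical_set_scope.
Local Open Scope ring_scope.

(* The Lyapunov function is
     V(b) = sum_i deg(i) P_i(b_i) + 1/2 sum_(i,j) a_ij (1 - b_i b_j),
   where P_i is a nonnegative primitive of h_i^-1 on [0, 1].  Since A is
   symmetric, the k-th partial derivative of V is deg(k) (h_k^-1(b_k) - mu_k),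
   so <F(b) - b, grad V(b)> is the sum over k of
     deg(k) (h_k(mu_k) - b_k) (h_k^-1(b_k) - mu_k).
   As h_k is increasing, the two factors have opposite signs, and the product
   vanishes only when h_k(mu_k) = b_k. *)

Section UnitIntervalInverse.
Context {R : realType} (f : R -> R).
Hypothesis f_bij : set_bij `[0, 1] `[0, 1] f.
Hypothesis f_homo : {in `[0, 1] &, {homo f : x y / x <= y}}.

(* Outside [0, 1] the default [id] makes [inv01] an increasing bijection of R,
   hence continuous on the neighbourhood [-1, 2] of [0, 1]: this is what the
   fundamental theorem of calculus needs at the endpoints 0 and 1. *)
Definition inv01 : R -> R := 'pinv_id [set` `[0, 1]] f.

Lemma inv01_out t : t \notin `[0, 1] -> inv01 t = t.
Proof.
move=> t01; rewrite /inv01 /pinv_ splitV oinv_surj.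
case: pselect => //= -[x x01 fx]; have [f_fun _ _] := f_bij.
by have := f_fun x x01; rewrite fx /= => t01'; rewrite t01' in t01.
Qed.

Lemma inv01_in : {homo inv01 : t / t \in `[0, 1]}.
Proof.
by move=> t t01; have [inv_fun _ _] := bijpinv_bij id f_bij; exact: inv_fun.
Qed.

Lemma inv01K : {in `[0, 1], cancel inv01 f}.
Proof.
by move=> t t01; have [_ _ f_surj] := f_bij; exact: (surjpK id f_surj (mem_set t01)).
Qed.

Lemma inv01_ltr : {homo inv01 : x y / x < y}.
Proof.
move=> x y xy.
have [x01|x01] := boolP (x \in `[0, 1]); have [y01|y01] := boolP (y \in `[0, 1]).
- rewrite ltNge; apply/negP => /f_homo; rewrite !inv01K ?inv01_in //.
  by move=> /(_ isT isT); rewrite leNgt xy.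
- have := inv01_in _ x01; rewrite (inv01_out _ y01).
  move: x01 y01; rewrite !in_itv /= negb_and -!ltNge.
  by move=> /andP[? _] /orP[] ? /andP[? ?]; lra.
- have := inv01_in _ y01; rewrite (inv01_out _ x01).
  move: x01 y01; rewrite !in_itv /= negb_and -!ltNge.
  by move=> /orP[] ? /andP[? ?] /andP[? ?]; lra.
- by rewrite !inv01_out.
Qed.

Lemma inv01_ler : {mono inv01 : x y / x <= y}.
Proof. exact: le_mono inv01_ltr. Qed.

Lemma mul_inv01_le0 (t m : R) : t \in `[0, 1] -> m \in `[0, 1] ->
  (f m - t) * (inv01 t - m) <= 0.
Proof.
move=> t01 m01; have s01 := inv01_in _ t01; have fs := inv01K _ t01.
have [sm|/ltW ms] := leP (inv01 t) m.
  have tfm : t <= f m by rewrite -fs f_homo.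
  by rewrite mulr_ge0_le0 ?subr_ge0 ?subr_le0.
have fmt : f m <= t by rewrite -fs f_homo.
by rewrite mulr_le0_ge0 ?subr_ge0 ?subr_le0.
Qed.

Lemma mul_inv01_eq0 (t m : R) : t \in `[0, 1] ->
  ((f m - t) * (inv01 t - m) == 0) = (f m == t).
Proof.
move=> t01; rewrite mulf_eq0 !subr_eq0.
by apply/orP/eqP => [[/eqP //|/eqP <-]|->]; [rewrite inv01K|left].
Qed.

Lemma inv01N1 : inv01 (-1) = -1.
Proof. by rewrite inv01_out // in_itv /= ler0N1. Qed.

Lemma inv01_surj : set_surj `[-1, 2] `[inv01 (-1), inv01 2] inv01.
Proof.
have inv01_2 : inv01 2 = 2.
  by rewrite inv01_out // in_itv /= negb_and -ltNge; apply/orP; right; lra.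
rewrite inv01N1 inv01_2 => z /=; have [f_fun f_inj _] := f_bij.
have [z01|z01] := boolP (z \in `[0, 1]).
  exists (f z); last by rewrite /inv01 (pinvKV id f_inj) //; exact: mem_set.
  by move: (f_fun z z01); rewrite /= !in_itv /= => /andP[? ?]; apply/andP; lra.
by move=> z12; exists z => //; rewrite inv01_out.
Qed.

Lemma within_continuous_inv01 : {within `[-1, 2], continuous inv01}.
Proof.
by apply: segment_inc_surj_continuous inv01_surj => u v _ _; exact: inv01_ler.
Qed.

Lemma continuous_inv01 x : -1 < x < 2 -> {for x, continuous inv01}.
Proof.
move=> x12; have N12 : (-1 : R) < 2 by lra.
have [cont _ _] := (continuous_within_itvP inv01 N12).1 within_continuous_inv01.
by apply: cont; rewrite in_itv.
Qed.

(* The integrand is nonnegative on [-1, +oo) because [inv01 (-1) = -1]; the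
   term [1 - x] cancels the [+ 1] in the derivative and is nonnegative on the
   cube. *)
Definition potential (x : R) : R :=
  parameterized_integral lebesgue_measure (-1) x (fun t => inv01 t + 1) + (1 - x).

Lemma potential_ge0 x : x <= 1 -> 0 <= potential x.
Proof.
move=> x1; rewrite addr_ge0 ?subr_ge0 //.
apply: Rintegral_ge0 => t /=; rewrite in_itv /= => /andP[t1 _].
have : inv01 (-1) <= inv01 t by rewrite inv01_ler.
by rewrite inv01N1; lra.
Qed.

Lemma is_derive_potential (x : R) :
  x \in `[0, 1] -> is_derive x 1 potential (inv01 x).
Proof.
rewrite in_itv /= => /andP[x0 x1].
have integrable_inv01 : lebesgue_measure.-integrable `[-1, 2]
    (EFin \o (fun t => inv01 t + 1)).
  apply: continuous_compact_integrable; first exact: segment_compact.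
  by move=> t; apply: continuousD; [exact: within_continuous_inv01|exact: cst_continuous].
have cont : {for x, continuous (fun t => inv01 t + 1)}.
  by apply: continuousD; [apply: continuous_inv01; lra|exact: cst_continuous].
have [x2 Nx] : x < 2 /\ -1 < x by split; lra.
have [derF F'] := continuous_FTC1_closed x2 integrable_inv01 Nx cont.
set F := fun x => _ in derF F'.
have dF : is_derive x 1 F (inv01 x + 1) by rewrite -F' derive1E; exact: derivableP.
have -> : potential = F + (cst 1 - id) by [].
by apply: is_derive_eq; rewrite sub0r addrK.
Qed.

End UnitIntervalInverse.

Section CoordinateDifferential.
Context {R : realFieldType} {m n : nat}.

Lemma is_diff_coord (M : 'M[R]_(m, n)) i j :
  is_diff M (fun N : 'M[R]_(m, n) => N i j) (fun N => N i j).
Proof.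
have @coordL : {linear 'M[R]_(m, n) -> R}.
  by exists (fun N : 'M[R]_(m, n) => N i j); do 2![eexists]; do ?[constructor];
    rewrite ?mxE// => ? *; rewrite ?mxE//; move=> ?; rewrite !mxE.
have coordE : (fun N : 'M[R]_(m, n) => N i j) = coordL by [].
apply: DiffDef; first exact: differentiable_coord.
by rewrite coordE diff_lin //; exact: coord_continuous.
Qed.

Lemma is_diff_comp_coord (g : R -> R) (dg : R) (M : 'M[R]_(m, n)) i j :
  is_derive (M i j) 1 g dg ->
  is_diff M (fun N : 'M[R]_(m, n) => g (N i j)) (fun N => N i j * dg).
Proof.
move=> [gD <-]; have g_diff : differentiable g (M i j) by apply/derivable1_diffP.
have := is_diff_comp (is_diff_coord M i j) (differentiableP g_diff).
by rewrite deriv1E // derive1E.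
Qed.

End CoordinateDifferential.

Lemma is_diff_sum {R : numFieldType} {V W : normedModType R} {k : nat}
    {F dF : 'I_k -> V -> W} {x : V} :
  (forall i, is_diff x (F i) (dF i)) ->
  is_diff x (fun y => \sum_(i < k) F i y) (fun v => \sum_(i < k) dF i v).
Proof.
have sumE (G : 'I_k -> V -> W) : (fun y => \sum_(i < k) G i y) = \sum_(i < k) G i.
  by apply/funext => y; rewrite fct_sumE.
move=> FdF; rewrite !sumE.
by elim/big_ind2 : _ => // [|] *; [exact: is_diff_cst|exact: is_diffD].
Qed.

Section QuadraticForm.
Context {R : realFieldType} {n : nat}.

Definition qform (A : 'M[R]_n) (b : 'rV[R]_n) : R :=
  \sum_(i < n) \sum_(j < n) A i j * (b ord0 i * b ord0 j).

Lemma is_diff_qform (A : 'M[R]_n) (b : 'rV[R]_n) : A^T = A ->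
  is_diff b (qform A)
    (fun v => 2 * \sum_(i < n) v ord0 i * \sum_(j < n) A i j * b ord0 j).
Proof.
move=> A_sym.
have entry_diff i j : is_diff b (fun c : 'rV[R]_n => A i j * (c ord0 i * c ord0 j))
    (fun v => A i j * (b ord0 i * v ord0 j + b ord0 j * v ord0 i)).
  exact: (is_diffZ (A i j) (is_diffM (is_diff_coord b ord0 i) (is_diff_coord b ord0 j))).
apply: is_diff_eq.
  by apply: is_diff_sum => i; apply: is_diff_sum => j; exact: entry_diff.
apply/funext => v; have A_swap i j : A i j = A j i by rewrite -{1}A_sym mxE.
have swap : \sum_(i < n) \sum_(j < n) A i j * (b ord0 i * v ord0 j) =
            \sum_(i < n) \sum_(j < n) A i j * (b ord0 j * v ord0 i).
  by rewrite exchange_big; apply: eq_bigr => i _; apply: eq_bigr => j _; rewrite A_swap.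
under eq_bigr do under eq_bigr do rewrite mulrDr.
under eq_bigr do rewrite big_split /=.
rewrite big_split /= swap -mulr2n mulr_natl; congr (_ *+ 2).
by apply: eq_bigr => i _; rewrite mulr_sumr; apply: eq_bigr => j _; rewrite mulrA mulrC.
Qed.

End QuadraticForm.

Lemma dotv_delta {R : realType} {n : nat} (u : 'rV[R]_n) k :
  dotv (delta_mx ord0 k) u = u ord0 k.
Proof.
rewrite /dotv (bigD1 k) //= mxE !eqxx mul1r big1 ?addr0 // => i ik.
by rewrite mxE eqxx (negbTE ik) mul0r.
Qed.

Section Lyapunov.
Context {R : realType} {n : nat} (A : 'M[R]_n) (h : 'I_n -> R -> R).
Hypothesis A_sym : A^T = A.
Hypothesis A_ge0 : forall i j, 0 <= A i j.
Hypothesis deg_gt0 : forall i, 0 < deg A i.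
Hypothesis h_bij : forall i, set_bij `[0, 1] `[0, 1] (h i).
Hypothesis h_homo : forall i, {in `[0, 1] &, {homo h i : x y / x <= y}}.

Lemma mu_in01 b i : cube b -> mu A b i \in `[0, 1].
Proof.
move=> b01; rewrite in_itv /= /mu; apply/andP; split.
  rewrite divr_ge0 ?(ltW (deg_gt0 i)) ?sumr_ge0 // => j _.
  by rewrite mulr_ge0 //; have /andP[] := b01 j.
rewrite ler_pdivrMr // mul1r /deg; apply: ler_sum => j _.
by have /andP[b0 b1] := b01 j; rewrite ler_piMr.
Qed.

Definition lyapunov (b : 'rV[R]_n) : R :=
  \sum_(i < n) deg A i * potential (h i) (b ord0 i)
  + 2^-1 * (\sum_(i < n) deg A i - qform A b).

Definition lyapunov_grad (b : 'rV[R]_n) : 'rV[R]_n :=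
  \row_k (deg A k * (inv01 (h k) (b ord0 k) - mu A b k)).

Lemma lyapunov_ge0 b : cube b -> 0 <= lyapunov b.
Proof.
move=> b01; rewrite addr_ge0 ?mulr_ge0 ?invr_ge0 ?ler0n //.
  apply: sumr_ge0 => i _; rewrite mulr_ge0 ?(ltW (deg_gt0 i)) ?potential_ge0 //.
  by have /andP[] := b01 i.
rewrite subr_ge0 /qform /deg; apply: ler_sum => i _; apply: ler_sum => j _.
have /andP[bi0 bi1] := b01 i; have /andP[bj0 bj1] := b01 j.
by rewrite ler_piMr // mulr_ile1.
Qed.

Lemma is_diff_lyapunov b : cube b ->
  is_diff b lyapunov (fun v => dotv v (lyapunov_grad b)).
Proof.
move=> b01.
have pot_diff i : is_diff b (fun c : 'rV[R]_n => deg A i * potential (h i) (c ord0 i))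
    (fun v => deg A i * (v ord0 i * inv01 (h i) (b ord0 i))).
  have bi01 : b ord0 i \in `[0, 1] by rewrite in_itv; exact: b01.
  have := is_derive_potential _ (h_bij i) (h_homo i) _ bi01.
  by move/is_diff_comp_coord/(is_diffZ (deg A i)).
have q_diff := is_diffZ 2^-1
  (is_diffB (is_diff_cst (\sum_(i < n) deg A i) b) (is_diff_qform A b A_sym)).
apply: (is_diff_eq (is_diffD (is_diff_sum pot_diff) q_diff)); apply/funext => v /=.
have grad_term k : v ord0 k * lyapunov_grad b ord0 k =
    deg A k * (v ord0 k * inv01 (h k) (b ord0 k))
    - v ord0 k * \sum_(j < n) A k j * b ord0 j.
  by rewrite mxE /mu; field; rewrite lt0r_neq0.
rewrite /dotv (eq_bigr _ (fun k _ => grad_term k)) sumrB !fctE /=.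
congr (_ + _).
by rewrite -[2^-1 *: _]/(2^-1 * _) -[0 v]/0 sub0r mulrN mulrA mulVf ?mul1r.
Qed.

Lemma grad_lyapunov b : cube b -> grad lyapunov b = lyapunov_grad b.
Proof.
move=> /is_diff_lyapunov lyap_diff; apply/rowP => k.
by rewrite mxE deriveE ?diff_val ?dotv_delta //; exact: ex_diff.
Qed.

Lemma dotv_lyapunov_grad b : dotv (Fmap A h b - b) (lyapunov_grad b) =
  \sum_(k < n) deg A k *
    ((h k (mu A b k) - b ord0 k) * (inv01 (h k) (b ord0 k) - mu A b k)).
Proof. by apply: eq_bigr => k _; rewrite !mxE mulrCA. Qed.

Section Terms.
Variables (b : 'rV[R]_n) (k : 'I_n).
Hypothesis b01 : cube b.

Let term :=
  deg A k * ((h k (mu A b k) - b ord0 k) * (inv01 (h k) (b ord0 k) - mu A b k)).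

Let bk01 : b ord0 k \in `[0, 1].
Proof. by rewrite in_itv; exact: b01. Qed.

Lemma lyapunov_term_le0 : term <= 0.
Proof. by rewrite mulr_ge0_le0 ?(ltW (deg_gt0 k)) ?mul_inv01_le0 ?mu_in01. Qed.

Lemma lyapunov_term_eq0 : (term == 0) = (h k (mu A b k) == b ord0 k).
Proof. by rewrite mulf_eq0 (negbTE (lt0r_neq0 (deg_gt0 k))) mul_inv01_eq0. Qed.

End Terms.

Lemma lyapunov_grad_le0 b :
  cube b -> dotv (Fmap A h b - b) (lyapunov_grad b) <= 0.
Proof.
move=> b01; rewrite dotv_lyapunov_grad -oppr_ge0 -sumrN; apply: sumr_ge0 => k _.
by rewrite oppr_ge0 lyapunov_term_le0.
Qed.

Lemma lyapunov_grad_eq0 b : cube b ->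
  dotv (Fmap A h b - b) (lyapunov_grad b) = 0 <-> Fmap A h b = b.
Proof.
move=> b01; rewrite dotv_lyapunov_grad; split => [|/rowP Fb].
  rewrite -[LHS]opprK -sumrN => /eqP; rewrite oppr_eq0 => /eqP /psumr_eq0P term0.
  apply/rowP => k; rewrite !mxE; apply/eqP; rewrite -lyapunov_term_eq0 // -oppr_eq0.
  by apply/eqP/term0 => // j _; rewrite oppr_ge0 lyapunov_term_le0.
apply: big1 => k _; apply/eqP; rewrite lyapunov_term_eq0 //.
by have := Fb k; rewrite !mxE => ->.
Qed.

End Lyapunov.

Theorem theorem1 (R : realType) (n : nat) (A : 'M[R]_n) (h : 'I_n -> R -> R) :
  A^T = A ->
  (forall i j, 0 <= A i j) ->
  (forall i, 0 < deg A i) ->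
  (forall i, set_bij `[0%R, 1%R] `[0%R, 1%R] (h i)) ->
  (forall i, {in `[0%R, 1%R] &, {homo h i : x y / x <= y}}) ->
  exists V : 'rV[R]_n -> R,
    (forall b, cube b -> differentiable V b) /\
    (forall b, cube b -> 0 <= V b) /\
    (forall b, cube b ->
       dotv (Fmap A h b - b) (grad V b) <= 0 /\
       (dotv (Fmap A h b - b) (grad V b) = 0 <-> Fmap A h b = b)).
Proof.
move=> A_sym A_ge0 deg_gt0 h_bij h_homo; exists (lyapunov A h); split; [|split].
- move=> b b01.
  have lyap_diff := is_diff_lyapunov A h A_sym deg_gt0 h_bij h_homo b b01.
  exact: ex_diff.
- exact: lyapunov_ge0.
- move=> b b01; rewrite grad_lyapunov //.
  by split; [exact: lyapunov_grad_le0|exact: lyapunov_grad_eq0].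
Qed.
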